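(* For all integers $m$ and $n$, \[ \sum_{k = (1+(-1)^n)/2}^n ( - 1)^{k - 1} L_{mk}^{\,4} = \frac{( - 1)^{n - 1}\,5F_{mn} F_{mn + m} \left\{ L_m L_{mn} L_{mn + m} + ( - 1)^{nm}4L_{2m} \right\}}{L_m L_{2m}}\,. \] (Here the summation starts at $k=1$ if $n$ is even and at $k=0$ if $n$ is odd.)
   Context: $F_i$ and $L_i$ denote the Fibonacci and Lucas numbers, defined for all $i\in\mathbb{Z}$ by $F_i=F_{i-1}+F_{i-2}$, $F_0=0$, $F_1=1$, and $L_i=L_{i-1}+L_{i-2}$, $L_0=2$, $L_1=1$; equivalently $F_{-i}=(-1)^{i-1}F_i$ and $L_{-i}=(-1)^iL_i$. Summation convention for an arbitrary integer upper limit: $\sum_{k=a}^{a-1} f(k)=0$, and for $n<a-1$, $\sum_{k=a}^{n} f(k) = -\sum_{k=n+1}^{a-1} f(k)$. *)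

From mathcomp Require Import all_boot all_order all_algebra.
Set Implicit Arguments. Unset Strict Implicit. Unset Printing Implicit Defensive.
Import Order.TTheory GRing.Theory Num.Theory.
Local Open Scope ring_scope.

Fixpoint fib_pair (n : nat) : int * int :=
  match n with
  | 0%N => (0, 1)
  | n'.+1 => let p := fib_pair n' in (p.2, p.1 + p.2)
  end.
Fixpoint luc_pair (n : nat) : int * int :=
  match n with
  | 0%N => (2, 1)
  | n'.+1 => let p := luc_pair n' in (p.2, p.1 + p.2)
  end.
Definition fibn (n : nat) : int := (fib_pair n).1.
Definition lucn (n : nat) : int := (luc_pair n).1.

(* Extension to all integers: F_{-i} = (-1)^(i-1) F_i, L_{-i} = (-1)^i L_i.
   Negz n denotes -(n+1). *)
Definition F (i : int) : int :=
  match i with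
  | Posz n => fibn n
  | Negz n => (-1) ^+ n * fibn n.+1
  end.
Definition L (i : int) : int :=
  match i with
  | Posz n => lucn n
  | Negz n => (-1) ^+ n.+1 * lucn n.+1
  end.

(* Summation with arbitrary integer bounds:
   sumZ a n f = sum_{k=a}^{n} f k, with sum_{k=a}^{a-1} = 0 and
   sum_{k=a}^{n} = - sum_{k=n+1}^{a-1} for n < a - 1. *)
Definition sumZ (R : zmodType) (a n : int) (f : int -> R) : R :=
  if (a <= n + 1)%R then \sum_(0 <= j < absz (n - a + 1)%R) f (a + j%:Z)%R
  else - \sum_(0 <= j < absz (a - 1 - n)%R) f (n + 1 + j%:Z)%R.

(* lower limit (1 + (-1)^n)/2 : 1 if n even, 0 if n odd *)
Definition low (n : int) : int := if (2 %| n)%Z then 1 else 0.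

(* Write S(n) for the sum from k = 0 and R(n) for the right-hand side.  The
   k = 0 term is -16 and the lower limit (1 + (-1)^n)/2 drops it exactly when n
   is even, so it suffices that S(n) + 8 (1 + (-1)^n) = R(n) for every integer n.
   By two-sided induction this reduces to the telescoping identity
     R(n+1) - R(n) = (-1)^n L_{mn+m}^4 - 16 (-1)^n,
   which becomes an identity of rational functions once F_{j+m}, L_{j+m} and
   L_{2m} are expanded by the addition formulas
     2 F_{a+b} = F_a L_b + L_a F_b,   2 L_{a+b} = L_a L_b + 5 F_a F_b
   and the signs (-1)^{mn}, (-1)^m are traded for Cassini's
   L_j^2 - 5 F_j^2 = 4 (-1)^j.  The addition formulas hold because both sides
   are Fibonacci-like in b and agree at b = 0 and b = 1. *)

From mathcomp Require Import all_boot all_order all_algebra.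
From mathcomp Require Import ring lra zify.
Set Implicit Arguments. Unset Strict Implicit. Unset Printing Implicit Defensive.
Import Order.TTheory GRing.Theory Num.Theory.
Local Open Scope ring_scope.

Lemma int_ind_succ (P : int -> Prop) (a : int) :
  P a -> (forall i, P i <-> P (i + 1)) -> forall i, P i.
Proof.
move=> Pa PS i; rewrite -(subrK a i) addrC; elim/int_rect: (i - a) => [|n|n].
- by rewrite addr0.
- by move/PS; rewrite -addrA -[n.+1]addn1 PoszD.
- by move=> IHn; apply/PS; rewrite -[n.+1]addn1 PoszD opprD addrA subrK.
Qed.

Section FibonacciLike.

Variable R : pzRingType.

Definition fibonacci_like (u : int -> R) := forall i, u (i + 2) = u (i + 1) + u i.

Lemma fibonacci_like_shift u a :
  fibonacci_like u -> fibonacci_like (fun i => u (a + i)).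
Proof. by move=> hu i; rewrite /= (addrA a i 2) (addrA a i 1) hu. Qed.

Lemma fibonacci_like_add u v :
  fibonacci_like u -> fibonacci_like v -> fibonacci_like (fun i => u i + v i).
Proof. by move=> hu hv i; rewrite hu hv addrACA. Qed.

Lemma fibonacci_like_scale c u :
  fibonacci_like u -> fibonacci_like (fun i => c * u i).
Proof. by move=> hu i; rewrite hu mulrDr. Qed.

Lemma fibonacci_like_eq u v : fibonacci_like u -> fibonacci_like v ->
  u 0 = v 0 -> u 1 = v 1 -> u =1 v.
Proof.
move=> hu hv h0 h1 i.
suff /(_ i) [] : forall i, u i = v i /\ u (i + 1) = v (i + 1) by [].
apply: (@int_ind_succ _ 0) => // j; rewrite -addrA.
split=> [[e0 e1] | [e1 e2]]; split=> //.
- by rewrite hu hv e0 e1.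
- by apply: (addrI (u (j + 1))); rewrite -hu e2 hv e1.
Qed.

End FibonacciLike.

Lemma fibn_rec n : fibn n.+2 = fibn n.+1 + fibn n.
Proof. by rewrite /fibn /= addrC. Qed.

Lemma lucn_rec n : lucn n.+2 = lucn n.+1 + lucn n.
Proof. by rewrite /lucn /= addrC. Qed.

Lemma fibonacci_like_F : fibonacci_like F.
Proof.
case=> [n|[|[|k]] //].
- by rewrite -!PoszD addn2 addn1 /= fibn_rec.
- have -> : Negz k.+2 + 2 = Negz k by lia.
  have -> : Negz k.+2 + 1 = Negz k.+1 by lia.
  by rewrite /= !fibn_rec !exprS; ring.
Qed.

Lemma fibonacci_like_L : fibonacci_like L.
Proof.
case=> [n|[|[|k]] //].
- by rewrite -!PoszD addn2 addn1 /= lucn_rec.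
- have -> : Negz k.+2 + 2 = Negz k by lia.
  have -> : Negz k.+2 + 1 = Negz k.+1 by lia.
  by rewrite /= !lucn_rec !exprS; ring.
Qed.

Lemma F_add1 i : 2 * F (i + 1) = F i + L i.
Proof.
rewrite addrC; move: i; apply: fibonacci_like_eq => //.
- exact/fibonacci_like_scale/fibonacci_like_shift/fibonacci_like_F.
- exact: fibonacci_like_add fibonacci_like_F fibonacci_like_L.
Qed.

Lemma L_add1 i : 2 * L (i + 1) = L i + 5 * F i.
Proof.
rewrite addrC; move: i; apply: fibonacci_like_eq => //.
- exact/fibonacci_like_scale/fibonacci_like_shift/fibonacci_like_L.
- exact/fibonacci_like_add/fibonacci_like_scale/fibonacci_like_F/fibonacci_like_L.
Qed.

Lemma F_add a b : 2 * F (a + b) = F a * L b + L a * F b.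
Proof.
move: b; apply: fibonacci_like_eq.
- exact/fibonacci_like_scale/fibonacci_like_shift/fibonacci_like_F.
- apply: fibonacci_like_add.
  + exact/fibonacci_like_scale/fibonacci_like_L.
  + exact/fibonacci_like_scale/fibonacci_like_F.
- by rewrite addr0 mulr0 addr0 mulrC.
- by rewrite F_add1 !mulr1.
Qed.

Lemma L_add a b : 2 * L (a + b) = L a * L b + 5 * F a * F b.
Proof.
move: b; apply: fibonacci_like_eq.
- exact/fibonacci_like_scale/fibonacci_like_shift/fibonacci_like_L.
- apply: fibonacci_like_add.
  + exact/fibonacci_like_scale/fibonacci_like_L.
  + exact/fibonacci_like_scale/fibonacci_like_F.
- by rewrite addr0 mulr0 addr0 mulrC.
- by rewrite L_add1 !mulr1.
Qed.

Lemma cassini_succ i :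
  L (i + 1) ^+ 2 - 5 * F (i + 1) ^+ 2 = - (L i ^+ 2 - 5 * F i ^+ 2).
Proof.
apply: (@mulfI _ 4) => //.
have -> : 4 * (L (i + 1) ^+ 2 - 5 * F (i + 1) ^+ 2)
          = (2 * L (i + 1)) ^+ 2 - 5 * (2 * F (i + 1)) ^+ 2 by ring.
by rewrite L_add1 F_add1; ring.
Qed.

Lemma cassini (R : unitRingType) i :
  (L i)%:~R ^+ 2 - 5 * (F i)%:~R ^+ 2 = 4 * (-1 : R) ^ i.
Proof.
have intrE j : (L j)%:~R ^+ 2 - 5 * (F j)%:~R ^+ 2
               = (L j ^+ 2 - 5 * F j ^+ 2)%:~R :> R.
  by rewrite !expr2 intrB !intrM rmorph_nat.
rewrite intrE; move: i; apply: (@int_ind_succ _ 0) => [|i].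
- by rewrite expr0z mulr1.
- rewrite cassini_succ intrN exprzDr ?unitrN1 // expr1z mulrN1 mulrN.
  by split=> [->|/oppr_inj].
Qed.

Lemma lucn_gt0 n : 0 < lucn n.
Proof.
suff: 0 < lucn n /\ 0 < lucn n.+1 by case.
by elim: n => [|n [h1 h2]] //; split=> //; rewrite lucn_rec addr_gt0.
Qed.

Lemma L_neq0 i : L i != 0.
Proof.
by case: i => n; rewrite /= ?mulf_neq0 ?signr_eq0 // gt_eqF ?lucn_gt0.
Qed.

Section IntegerSums.

Variables (R : zmodType) (f : int -> R).

Lemma sumZ_recr a n : sumZ a (n + 1) f = sumZ a n f + f (n + 1).
Proof.
rewrite /sumZ; case: ifP => h1; case: ifP => h2.
- have [k hk] : exists k : nat, n - a + 1 = k by exists (absz (n - a + 1)%R); lia.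
  have -> : n + 1 - a + 1 = k.+1 by lia.
  by rewrite hk /= big_nat_recr //=; congr (_ + f _); lia.
- have -> : a = n + 2 by lia.
  have -> : n + 1 - (n + 2) + 1 = 0 by ring.
  have -> : n + 2 - 1 - n = 1 by ring.
  by rewrite /= big_nat1 big_geq // addr0 addNr.
- by move/negbT: h1; lia.
- have [k hk] : exists k : nat, a - 1 - (n + 1) = k.
    by exists (absz (a - 1 - (n + 1))%R); lia.
  have -> : a - 1 - n = k.+1 by lia.
  rewrite hk /= big_nat_recl // addr0 opprD [RHS]addrAC addNr add0r.
  by congr (- _); apply: eq_bigr => j _; congr f; lia.
Qed.

Lemma sumZ_id a : sumZ a a f = f a.
Proof. by rewrite /sumZ lerDl ler01 subrr add0r big_nat1 addr0. Qed.

Lemma sumZ_nil a : sumZ (a + 1) a f = 0.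
Proof. by rewrite /sumZ lexx opprD addrA subrr add0r addNr big_geq. Qed.

Lemma sumZ_recl a n : sumZ a n f = f a + sumZ (a + 1) n f.
Proof.
move: n; apply: (@int_ind_succ _ a) => [|n]; first by rewrite sumZ_id sumZ_nil addr0.
by rewrite !sumZ_recr addrA; split=> [->|/addIr].
Qed.

End IntegerSums.

Section Signs.

Variable R : unitRingType.

Lemma signz_addr1 i : (-1 : R) ^ (i + 1) = - (-1) ^ i.
Proof. by rewrite exprzDr ?unitrN1 // expr1z mulrN1. Qed.

Lemma signz_subr1 i : (-1 : R) ^ (i - 1) = - (-1) ^ i.
Proof. by rewrite exprzDr ?unitrN1 // exprN1 invrN1 mulrN1. Qed.

Lemma sqr_signz i : ((-1 : R) ^ i) ^+ 2 = 1.
Proof. by rewrite exprnP exprzAC -exprnP sqrrN expr1n exp1rz. Qed.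

Lemma signz_dvd2 i : (-1 : R) ^ i = if (2 %| i)%Z then 1 else -1.
Proof.
case: i => n; rewrite ?NegzE -?exprnN ?invr_sign -?exprnP.
all: by rewrite dvdzE ?abszN -signr_odd dvdn2 /=; case: (odd _).
Qed.

End Signs.

Lemma quartic_step (K : numFieldType) (x y x1 y1 x2 y2 a b c e s t : K) :
  b != 0 -> c != 0 ->
  y ^+ 2 - 5 * x ^+ 2 = 4 * s -> b ^+ 2 - 5 * a ^+ 2 = 4 * t ->
  s ^+ 2 = 1 -> t ^+ 2 = 1 -> 2 * c = b * b + 5 * a * a ->
  2 * x1 = x * b + y * a -> 2 * y1 = y * b + 5 * x * a ->
  2 * x2 = x1 * b + y1 * a -> 2 * y2 = y1 * b + 5 * x1 * a ->
  e * 5 * x1 * x2 * (b * y1 * y2 + s * t * 4 * c) / (b * c)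
  - - e * 5 * x * x1 * (b * y * y1 + s * 4 * c) / (b * c)
  = e * y1 ^+ 4 - 16 * e.
Proof.
move=> b0 c0 hs ht s2 t2 hc hx1 hy1 hx2 hy2.
have half (u v : K) : 2 * u = v -> u = v / 2 by move=> <-; field.
have quarter (u v : K) : v = 4 * u -> u = v / 4 by move=> ->; field.
move/half: hx2 => ->; move/half: hy2 => ->.
move/half: hx1 => ->; move/half: hy1 => ->.
move/half: hc => hc; rewrite hc in c0 *.
move: c0; rewrite mulf_eq0 negb_or => /andP[c0 _].
(* The signs enter only through s^2 = t^2 = 1: homogenising with these and then
   substituting Cassini's values for s and t leaves a pure field identity. *)
set B := (- e * 5 * _ * _ * _ / _).
have -> : 16 * e = 16 * e * s ^+ 2 * t ^+ 2 by rewrite s2 t2 !mulr1.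
have -> : B = t ^+ 2 * B by rewrite t2 mul1r.
rewrite /B; move/quarter: hs => ->; move/quarter: ht => ->.
by field; rewrite b0 c0.
Qed.

Definition quartic_term (m k : int) : rat := (-1) ^ (k - 1) * (L (m * k))%:~R ^+ 4.

Definition quartic_closed_form (m n : int) : rat :=
  ((-1 : rat) ^ (n - 1) * 5 * (F (m * n))%:~R * (F (m * n + m))%:~R
      * ((L m)%:~R * (L (m * n))%:~R * (L (m * n + m))%:~R
         + (-1 : rat) ^ (n * m) * 4 * (L (2 * m))%:~R))
    / ((L m)%:~R * (L (2 * m))%:~R).

Lemma quartic_closed_form_succ m n :
  quartic_closed_form m (n + 1) - quartic_closed_form m n
  = quartic_term m (n + 1) - 16 * (-1) ^ n.
Proof.
have double_intr (z w : int) : 2 * z = w -> 2 * (z%:~R : rat) = w%:~R.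
  by move=> <-; rewrite intrM.
rewrite /quartic_closed_form /quartic_term addrK.
rewrite (mulrDr m n 1) mulr1 (mulrDl n 1 m) mul1r.
rewrite signz_subr1 exprzDr ?unitrN1 //.
have -> : 2 * m = m + m by ring.
apply: quartic_step; rewrite ?intr_eq0 ?L_neq0 ?sqr_signz //.
- by rewrite [n * m]mulrC cassini.
- exact: cassini.
- by rewrite (double_intr _ _ (L_add _ _)) intrD !intrM.
- by rewrite (double_intr _ _ (F_add _ _)) intrD !intrM.
- by rewrite (double_intr _ _ (L_add _ _)) intrD !intrM.
- by rewrite (double_intr _ _ (F_add _ _)) intrD !intrM.
- by rewrite (double_intr _ _ (L_add _ _)) intrD !intrM.
Qed.

Lemma quartic_term0 m : quartic_term m 0 = -16.
Proof. by rewrite /quartic_term mulr0 signz_subr1 expr0z mulN1r. Qed.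

Lemma sumZ_quartic_term m n :
  sumZ 0 n (quartic_term m) + 8 * (1 + (-1) ^ n) = quartic_closed_form m n.
Proof.
move: n; apply: (@int_ind_succ _ 0) => [|n].
- by rewrite sumZ_id quartic_term0 /quartic_closed_form !mulr0 /= !mul0r expr0z.
- have := quartic_closed_form_succ m n.
  by rewrite sumZ_recr signz_addr1; split=> ?; lra.
Qed.

Theorem theorem4 (m n : int) :
  sumZ (low n) n
    (fun k => (-1 : rat) ^ (k - 1) * ((L (m * k))%:~R) ^+ 4)
  = ((-1 : rat) ^ (n - 1) * 5 * (F (m * n))%:~R * (F (m * n + m))%:~R
      * ((L m)%:~R * (L (m * n))%:~R * (L (m * n + m))%:~R
         + (-1 : rat) ^ (n * m) * 4 * (L (2 * m))%:~R))
    / ((L m)%:~R * (L (2 * m))%:~R).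
Proof.
change (sumZ (low n) n (quartic_term m) = quartic_closed_form m n).
rewrite -sumZ_quartic_term signz_dvd2 /low; case: ifP => _.
- by rewrite (sumZ_recl _ 0) quartic_term0 add0r; lra.
- by rewrite subrr mulr0 addr0.
Qed.
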